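(* Let $\alpha,\beta,\gamma,\delta\in\mathbb{R}$ with $\alpha+\delta\neq 0$ and $\alpha\gamma+\beta\delta=0$, and let $G_5$ be the connected, simply connected Lie group whose Lie algebra $\mathfrak{g}_5$ has a basis $\{e_1,e_2,e_3\}$ with $[e_1,e_2]=0$, $[e_1,e_3]=\alpha e_1+\beta e_2$, $[e_2,e_3]=\gamma e_1+\delta e_2$, equipped with the left-invariant Lorentzian metric $g$ for which $\{e_1,e_2,e_3\}$ is pseudo-orthonormal with $e_3$ timelike, and with the product structure $J$. Let $\lambda_0,c\in\mathbb{R}$. Then there exists a derivation $D$ of $\mathfrak{g}_5$ with $\widetilde{\mathrm{Ric}}^1=(s^1\lambda_0+c)\mathrm{Id}+D$ (i.e. $(G_5,g,J)$ is an algebraic Schouten soliton associated to the Kobayashi–Nomizu connection $\nabla^1$) if and only if $c=0$.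
   Context: Pseudo-orthonormal means $g(e_1,e_1)=g(e_2,e_2)=1$, $g(e_3,e_3)=-1$, $g(e_i,e_j)=0$ for $i\neq j$; left-invariant tensors are identified with their values on $\mathfrak{g}$. $\nabla$ is the Levi-Civita connection of $g$. The product structure $J$ is the left-invariant endomorphism with $Je_1=e_1$, $Je_2=e_2$, $Je_3=-e_3$. The canonical connection is $\nabla^0_XY=\nabla_XY-\frac12(\nabla_XJ)JY$, and the Kobayashi–Nomizu connection is $\nabla^1_XY=\nabla^0_XY-\frac14[(\nabla_YJ)JX-(\nabla_{JY}J)X]$. For $k=0,1$: $R^k(X,Y)Z=\nabla^k_X\nabla^k_YZ-\nabla^k_Y\nabla^k_XZ-\nabla^k_{[X,Y]}Z$; $\rho^k(X,Y)=-g(R^k(X,e_1)Y,e_1)-g(R^k(X,e_2)Y,e_2)+g(R^k(X,e_3)Y,e_3)$; $\widetilde\rho^k(X,Y)=\frac12(\rho^k(X,Y)+\rho^k(Y,X))$; $\widetilde{\mathrm{Ric}}^k$ is defined by $\widetilde\rho^k(X,Y)=g(\widetilde{\mathrm{Ric}}^k(X),Y)$; and $s^k=\widetilde\rho^k(e_1,e_1)+\widetilde\rho^k(e_2,e_2)-\widetilde\rho^k(e_3,e_3)$. A derivation of $\mathfrak{g}$ is a linear map $D$ with $D[X,Y]=[DX,Y]+[X,DY]$. $(G,g,J)$ is an algebraic Schouten soliton associated to $\nabla^k$ (with real constants $\lambda_0,c$) if $\widetilde{\mathrm{Ric}}^k=(s^k\lambda_0+c)\mathrm{Id}+D$ for some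 derivation $D$. *)

(* Left-invariant objects on G_5 are identified with their
   values on the Lie algebra g_5 = R^3 (row vectors 'rV[R]_3, coordinates in
   the basis e_1,e_2,e_3 = e 0, e 1, e 2). *)
From HB Require Import structures.
From mathcomp Require Import all_boot all_order all_algebra.
From mathcomp Require Import reals.
Set Implicit Arguments. Unset Strict Implicit. Unset Printing Implicit Defensive.
Import Order.TTheory GRing.Theory Num.Theory.
Local Open Scope ring_scope.

Section G5.
Variable R : realType.
Variables (al be ga de : R).

Definition vec := 'rV[R]_3.

Definition e (i : 'I_3) : vec := delta_mx 0 i.

Definition eps (i : 'I_3) : R := if val i == 2%N then -1 else 1.

Definition gm (u v : vec) : R := \sum_(i < 3) eps i * u 0 i * v 0 i.

Definition brb (i j : 'I_3) : vec :=
  match (val i : nat), (val j : nat) with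
  | 0%N, 2%N => al *: e 0 + be *: e 1
  | 2%N, 0%N => - (al *: e 0 + be *: e 1)
  | 1%N, 2%N => ga *: e 0 + de *: e 1
  | 2%N, 1%N => - (ga *: e 0 + de *: e 1)
  | _, _ => 0
  end.

Definition br (u v : vec) : vec :=
  \sum_(i < 3) \sum_(j < 3) (u 0 i * v 0 j) *: brb i j.

(* Levi-Civita connection on left-invariant fields (Koszul formula):
   2 g(nab X Y, Z) = g([X,Y],Z) - g([Y,Z],X) + g([Z,X],Y),
   solved in the pseudo-orthonormal basis. *)
Definition nab (X Y : vec) : vec :=
  \sum_(k < 3) ((eps k / 2) *
     (gm (br X Y) (e k) - gm (br Y (e k)) X + gm (br (e k) X) Y)) *: e k.

Definition Jm (X : vec) : vec := \row_(i < 3) (eps i * X 0 i).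

Definition nabJ (X Y : vec) : vec := nab X (Jm Y) - Jm (nab X Y).

Definition nab0 (X Y : vec) : vec := nab X Y - (1/2) *: nabJ X (Jm Y).

Definition nab1 (X Y : vec) : vec :=
  nab0 X Y - (1/4) *: (nabJ Y (Jm X) - nabJ (Jm Y) X).

Definition curv1 (X Y Z : vec) : vec :=
  nab1 X (nab1 Y Z) - nab1 Y (nab1 X Z) - nab1 (br X Y) Z.

Definition rho1 (X Y : vec) : R :=
  - gm (curv1 X (e 0) Y) (e 0) - gm (curv1 X (e 1) Y) (e 1)
  + gm (curv1 X (e 2) Y) (e 2).

Definition rhot1 (X Y : vec) : R := (rho1 X Y + rho1 Y X) / 2.

Definition Ric1 (X : vec) : vec :=
  \sum_(k < 3) (eps k * rhot1 X (e k)) *: e k.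

Definition s1 : R := rhot1 (e 0) (e 0) + rhot1 (e 1) (e 1) - rhot1 (e 2) (e 2).

(* derivations of g_5; a linear map is a matrix acting on row vectors *)
Definition is_derivation (D : 'M[R]_3) : Prop :=
  forall X Y : vec, br X Y *m D = br (X *m D) Y + br X (Y *m D).

Definition alg_schouten_soliton1 (lam0 c : R) : Prop :=
  exists D : 'M[R]_3, is_derivation D /\
    forall X : vec, Ric1 X = (s1 * lam0 + c) *: X + X *m D.

End G5.

From HB Require Import structures.
From mathcomp Require Import all_boot all_order all_algebra.
From mathcomp Require Import reals ring.
Import Order.TTheory GRing.Theory Num.Theory.
Local Open Scope ring_scope.
Set Implicit Arguments. Unset Strict Implicit.

(** In the pseudo-orthonormal basis the Kobayashi-Nomizu connection is
   [nab1 X = ad (x_3 e_3)]: it only sees the timelike component of [X].  All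
   these operators are multiples of [ad e_3], hence commute, and a bracket has
   no timelike component, so [nab1] is flat; thus [Ric1 = 0] and [s1 = 0].
   The soliton equation then reads [D = - c Id], and a homothety is a
   derivation only if it kills the derived algebra.  Since
   [tr (ad e_3) = - (al + de) <> 0], the algebra is not abelian, so [c = 0]. *)

Definition i0 : 'I_3 := @Ordinal 3 0 isT.
Definition i1 : 'I_3 := @Ordinal 3 1 isT.
Definition i2 : 'I_3 := @Ordinal 3 2 isT.

Lemma big_ord3 (V : nmodType) (F : 'I_3 -> V) :
  \sum_(i < 3) F i = F i0 + F i1 + F i2.
Proof.
by rewrite !big_ord_recr big_ord0 /= add0r; congr (_ + _ + _); congr F; apply/val_inj.
Qed.

Lemma row3_ext (T : Type) (u v : 'rV[T]_3) :
  u 0 i0 = v 0 i0 -> u 0 i1 = v 0 i1 -> u 0 i2 = v 0 i2 -> u = v.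
Proof.
by move=> ? ? ?; apply/rowP => -[[|[|[|//]]] k3]; rewrite (bool_irrelevance k3 isT).
Qed.

Section G5.
Variables (R : realType) (al be ga de : R).
Local Notation vec := (vec R).
Local Notation e := (e R).
Local Notation br := (br al be ga de).
Local Notation nab := (nab al be ga de).

Definition vec3 (a b c : R) : vec := \row_k nth 0 [:: a; b; c] k.

Lemma gmE (u v : vec) :
  gm u v = u 0 i0 * v 0 i0 + u 0 i1 * v 0 i1 - u 0 i2 * v 0 i2.
Proof. by rewrite /gm big_ord3 /eps /= !mul1r mulN1r mulNr. Qed.

Lemma gm0l (v : vec) : gm 0 v = 0.
Proof. by rewrite gmE !mxE !mul0r subr0 addr0. Qed.

Lemma coord_sum_e (c : 'I_3 -> R) (j : 'I_3) : (\sum_k c k *: e k) 0 j = c j.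
Proof.
rewrite summxE (bigD1 j) //= big1 ?addr0 => [|k /negPf kj]; rewrite !mxE ?eqxx ?mulr1 //.
by rewrite eq_sym kj mulr0.
Qed.

Lemma brZl a u v : br (a *: u) v = a *: br u v.
Proof.
rewrite /br scaler_sumr; apply: eq_bigr => i _; rewrite scaler_sumr.
by apply: eq_bigr => j _; rewrite mxE scalerA mulrA.
Qed.

Lemma brZr a u v : br u (a *: v) = a *: br u v.
Proof.
rewrite /br scaler_sumr; apply: eq_bigr => i _; rewrite scaler_sumr.
by apply: eq_bigr => j _; rewrite mxE scalerA mulrCA.
Qed.

Lemma br0l v : br 0 v = 0.
Proof. by have := brZl 0 0 v; rewrite !scale0r. Qed.

Lemma br0r u : br u 0 = 0.
Proof. by have := brZr 0 u 0; rewrite !scale0r. Qed.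

Lemma brE u v : br u v = vec3
  ((u 0 i0 * v 0 i2 - u 0 i2 * v 0 i0) * al + (u 0 i1 * v 0 i2 - u 0 i2 * v 0 i1) * ga)
  ((u 0 i0 * v 0 i2 - u 0 i2 * v 0 i0) * be + (u 0 i1 * v 0 i2 - u 0 i2 * v 0 i1) * de)
  0.
Proof. by apply: row3_ext; rewrite /br /brb !summxE !big_ord3 /= !mxE /=; ring. Qed.

Lemma br_timelike u v : br u v 0 i2 = 0.
Proof. by rewrite brE mxE. Qed.

Ltac coords := rewrite /eps ?(big_ord3, coord_sum_e, gmE, brE, mxE) /=.

Lemma nabE X Y : nab X Y = vec3
  (2^-1 * (- ga * X 0 i2 * Y 0 i1 + ga * X 0 i1 * Y 0 i2 + be * X 0 i2 * Y 0 i1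
           + be * X 0 i1 * Y 0 i2) + al * X 0 i0 * Y 0 i2)
  (2^-1 * (ga * X 0 i2 * Y 0 i0 + ga * X 0 i0 * Y 0 i2 - be * X 0 i2 * Y 0 i0
           + be * X 0 i0 * Y 0 i2) + de * X 0 i1 * Y 0 i2)
  (2^-1 * (ga * X 0 i1 * Y 0 i0 + ga * X 0 i0 * Y 0 i1 + be * X 0 i1 * Y 0 i0
           + be * X 0 i0 * Y 0 i1) + al * X 0 i0 * Y 0 i0 + de * X 0 i1 * Y 0 i1).
Proof. by apply: row3_ext; rewrite /nab; coords; field. Qed.

Lemma nab1E X Y : nab1 al be ga de X Y = br (X 0 i2 *: e i2) Y.
Proof. by apply: row3_ext; rewrite /nab1 /nab0 /nabJ /Jm !nabE; coords; field. Qed.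

Lemma curv1_eq0 X Y Z : curv1 al be ga de X Y Z = 0.
Proof.
rewrite /curv1 !nab1E br_timelike scale0r br0l subr0 !brZl !brZr !scalerA.
by rewrite mulrC subrr.
Qed.

Lemma rhot1_eq0 X Y : rhot1 al be ga de X Y = 0.
Proof. by rewrite /rhot1 /rho1 !curv1_eq0 !gm0l oppr0 !addr0 mul0r. Qed.

Lemma Ric1_eq0 X : Ric1 al be ga de X = 0.
Proof. by rewrite /Ric1 big1 // => k _; rewrite rhot1_eq0 mulr0 scale0r. Qed.

Lemma s1_eq0 : s1 al be ga de = 0.
Proof. by rewrite /s1 !rhot1_eq0 subr0 addr0. Qed.

Lemma derivation0 : is_derivation al be ga de 0.
Proof. by move=> X Y; rewrite !mulmx0 br0l br0r addr0. Qed.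

Lemma derivation_homothety (D : 'M[R]_3) (a : R) :
  is_derivation al be ga de D -> (forall X : vec, X *m D = a *: X) ->
  forall u v, a *: br u v = 0.
Proof.
move=> dD hD u v; have := dD u v; rewrite !hD brZl brZr => h.
by apply: (addrI (a *: br u v)); rewrite addr0 -h.
Qed.

Lemma br_annihilator_eq0 (a : R) :
  al + de != 0 -> (forall u v, a *: br u v = 0) -> a = 0.
Proof.
move=> h ann; have coord k u v : a * br u v 0 k = 0.
  by have := congr1 (fun w : vec => w 0 k) (ann u v); rewrite !mxE.
have : a * (al + de) = a * br (e i0) (e i2) 0 i0 + a * br (e i1) (e i2) 0 i1.
  by rewrite !brE !mxE /=; ring.
by rewrite !coord addr0 => /eqP; rewrite mulf_eq0 (negPf h) orbF => /eqP.
Qed.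

End G5.

Theorem theorem4p11 (R : realType) (al be ga de : R)
  (h1 : al + de != 0) (h2 : al * ga + be * de = 0) (lam0 c : R) :
  alg_schouten_soliton1 al be ga de lam0 c <-> c = 0.
Proof.
split=> [[D [dD hRic]] | ->].
- have hD (X : vec R) : X *m D = - c *: X.
    have := hRic X; rewrite Ric1_eq0 s1_eq0 mul0r add0r => /eqP.
    by rewrite eq_sym addrC addr_eq0 scaleNr => /eqP.
  by apply/eqP; rewrite -oppr_eq0 (br_annihilator_eq0 h1 (derivation_homothety dD hD)).
- exists 0; split; first exact: derivation0.
  by move=> X; rewrite Ric1_eq0 s1_eq0 mul0r add0r scale0r mulmx0 addr0.
Qed.
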